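(* Let $R$ be a reduced ring and $n\ge 1$. Then the ring $$S=\left\{\begin{pmatrix} a & a_{12} & \cdots & a_{1n}\\ 0 & a & \cdots & a_{2n}\\ \vdots & \vdots & \ddots & \vdots\\ 0&0&\cdots & a\end{pmatrix} : a, a_{ij}\in R\right\}$$ of upper triangular $n\times n$ matrices over $R$ with constant diagonal is almost Armendariz.
   Context: All rings are associative with identity. A ring is reduced if it has no nonzero nilpotent elements. For a ring $R$, $P(R)$ denotes the prime radical of $R$ (the intersection of all prime ideals of $R$, equivalently the set of strongly nilpotent elements of $R$). A ring $R$ is called almost Armendariz if whenever $f(x)=\sum_{i=0}^m a_ix^i$ and $g(x)=\sum_{j=0}^n b_jx^j\in R[x]$ satisfy $f(x)g(x)=0$, then $a_ib_j\in P(R)$ for all $0\le i\le m$, $0\le j\le n$. *)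

From HB Require Import structures.
From mathcomp Require Import all_boot all_order all_algebra.
Set Implicit Arguments. Unset Strict Implicit. Unset Printing Implicit Defensive.
Import Order.TTheory GRing.Theory Num.Theory.
Local Open Scope ring_scope.

Definition reduced (R : nzRingType) : Prop :=
  forall (x : R) (k : nat), x ^+ k = 0 -> x = 0.

Definition is_ideal (R : nzRingType) (I : R -> Prop) : Prop :=
  [/\ I 0,
      (forall x y, I x -> I y -> I (x - y)),
      (forall r x, I x -> I (r * x)) &
      (forall r x, I x -> I (x * r))].

Definition prime_ideal (R : nzRingType) (I : R -> Prop) : Prop :=
  [/\ is_ideal I, ~ I 1 &
      (forall a b, (forall r, I (a * r * b)) -> I a \/ I b)].

Definition prime_radical (R : nzRingType) (x : R) : Prop :=
  forall I : R -> Prop, prime_ideal I -> I x.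

Definition almost_armendariz (R : nzRingType) : Prop :=
  forall f g : {poly R}, f * g = 0 ->
    forall i j : nat, prime_radical (f`_i * g`_j).

Section UTCD.
Variables (R : nzRingType) (n : nat).

(* Matrices of size n.+1 (i.e. n >= 1 is encoded by writing the size as n.+1). *)
Definition utcd_pred : {pred 'M[R]_n.+1} :=
  fun A => [forall i : 'I_n.+1, forall j : 'I_n.+1, (j < i)%N ==> (A i j == 0)]
        && [forall i : 'I_n.+1, A i i == A ord0 ord0].

Lemma utcd_subring_closed : subring_closed utcd_pred.
Proof.
split.
- apply/andP; split; apply/forallP=> i; [apply/forallP=> j; apply/implyP=> lt_ji|].
    have nij : i != j by apply/eqP=> E; rewrite E ltnn in lt_ji.
    by rewrite mxE (negbTE nij).
  by rewrite !mxE !eqxx.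
- move=> A B /andP[/forallP tA /forallP dA] /andP[/forallP tB /forallP dB].
  apply/andP; split; apply/forallP=> i; [apply/forallP=> j; apply/implyP=> lt_ji|].
    rewrite !mxE.
    move: (tA i) (tB i) => /forallP/(_ j)/implyP/(_ lt_ji)/eqP-> /forallP/(_ j)/implyP/(_ lt_ji)/eqP->.
    by rewrite subrr.
  by rewrite !mxE (eqP (dA i)) (eqP (dB i)).
- move=> A B /andP[/forallP tA /forallP dA] /andP[/forallP tB /forallP dB].
  have key : forall i j : 'I_n.+1, (A *m B) i j =
    if (j < i)%N then 0 else if i == j then A i i * B i i else (A *m B) i j.
    move=> i j; case: ltnP => lt_ji.
      rewrite mxE big1 // => k _.
      case: (ltnP k i) => lt_ki.
        by move: (tA i) => /forallP/(_ k)/implyP/(_ lt_ki)/eqP->; rewrite mul0r.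
      have lt_jk : (j < k)%N by apply: leq_trans lt_ji lt_ki.
      by move: (tB k) => /forallP/(_ j)/implyP/(_ lt_jk)/eqP->; rewrite mulr0.
    case: eqP => // <-.
    rewrite mxE (bigD1 i) //= big1 ?addr0 // => k nki.
    case: (ltnP k i) => lt_ki.
      by move: (tA i) => /forallP/(_ k)/implyP/(_ lt_ki)/eqP->; rewrite mul0r.
    have lt_ik : (i < k)%N by rewrite ltn_neqAle lt_ki andbT; apply: contra nki => /eqP/val_inj->.
    by move: (tB k) => /forallP/(_ i)/implyP/(_ lt_ik)/eqP->; rewrite mulr0.
  apply/andP; split; apply/forallP=> i; [apply/forallP=> j; apply/implyP=> lt_ji|].
    by rewrite key lt_ji.
  by rewrite key ltnn eqxx [X in _ == X]key ltnn eqxx (eqP (dA i)) (eqP (dB i)).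
Qed.

HB.instance Definition _ := GRing.isSubringClosed.Build _ utcd_pred utcd_subring_closed.

Record utcd := UTCD { utcd_val :> 'M[R]_n.+1; _ : utcd_val \in utcd_pred }.

HB.instance Definition _ := [isSub for utcd_val].
HB.instance Definition _ := [Choice of utcd by <:].
HB.instance Definition _ := [SubChoice_isSubNzRing of utcd by <:].

End UTCD.

(* A reduced ring is Armendariz: if f g = 0 then every product of
   coefficients a_i b_j vanishes. In S the diagonal entry is a ring morphism
   onto R, so f g = 0 forces the products of the diagonal entries of the
   coefficients to vanish. An element of S with zero diagonal is strictly
   upper triangular, and such elements lie in every prime ideal P: if y has
   zeros below its d-th superdiagonal then so does y r y below its 2d-th, and
   primality of P lets one descend from y r y to y, down from the zero matrix. *)

From HB Require Import structures.
From mathcomp Require Import all_boot all_order all_algebra.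
From mathcomp Require Import zify.
Import GRing.Theory.
Local Open Scope ring_scope.

Section Reduced.
Variable R : nzRingType.
Hypothesis redR : reduced R.

Lemma reduced_sqr_eq0 (x : R) : x * x = 0 -> x = 0.
Proof. by move=> xx0; apply: (redR _ 2); rewrite expr2. Qed.

Lemma reduced_mulrC0 (a b : R) : a * b = 0 -> b * a = 0.
Proof.
by move=> ab0; apply: reduced_sqr_eq0; rewrite mulrA -(mulrA b) ab0 mulr0 mul0r.
Qed.

Lemma reduced_armendariz (f g : {poly R}) :
  f * g = 0 -> forall i j, f`_i * g`_j = 0.
Proof.
move=> fg0.
suff diag0 k p : (p <= k)%N -> f`_p * g`_(k - p) = 0.
  by move=> i j; have := diag0 (i + j)%N i (leq_addr _ _); rewrite addKn.
elim/ltn_ind: k p => k IHk; elim/ltn_ind => p IHp le_pk.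
(* Multiply the k-th coefficient of f g on the right by f_p: every term
   other than the p-th dies, by induction on p below and on k above. *)
have coefk : \sum_(l < k.+1) f`_l * g`_(k - l) * f`_p = f`_p * g`_(k - p) * f`_p.
  rewrite (bigD1 (Ordinal (le_pk : p < k.+1)%N)) //= big1 ?addr0 // => l ne_lp.
  have lt_lk := ltn_ord l.
  case: (ltngtP l p) => [lt_lp|lt_pl|eq_lp]; last by case/eqP: ne_lp; apply: val_inj.
    by rewrite IHp ?mul0r //; lia.
  have fg_pl : f`_p * g`_(k - l) = 0.
    by have := IHk (p + (k - l))%N _ p; rewrite addKn; apply; lia.
  by rewrite -mulrA (reduced_mulrC0 _ _ fg_pl) mulr0.
move: coefk; rewrite -big_distrl /= -coefM fg0 coef0 mul0r => /esym fgf0.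
by apply: reduced_sqr_eq0; rewrite mulrA fgf0 mul0r.
Qed.

End Reduced.

Section UpperTriangularConstantDiagonal.
Variables (R : nzRingType) (n : nat).

Definition mx_deep (d : nat) (A : 'M[R]_n.+1) :=
  forall i j : 'I_n.+1, (j < i + d)%N -> A i j = 0.

Lemma mx_deepM d e A B : mx_deep d A -> mx_deep e B -> mx_deep (d + e) (A *m B).
Proof.
move=> dA dB i j lt_j; rewrite mxE big1 // => l _.
case: (ltnP l (i + d)) => [lt_l|le_l]; first by rewrite dA ?mul0r.
by rewrite dB ?mulr0 //; lia.
Qed.

Lemma mx_deep_le d e A : (d <= e)%N -> mx_deep e A -> mx_deep d A.
Proof. by move=> le_de dA i j lt_j; apply: dA; lia. Qed.

Lemma mx_deep_eq0 A : mx_deep n.+1 A -> A = 0.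
Proof.
by move=> dA; apply/matrixP => i j; rewrite mxE dA //; have := ltn_ord j; lia.
Qed.

Lemma utcd_deep0 (x : utcd R n) : mx_deep 0 (val x).
Proof.
case/andP: (valP x) => /forallP tri _ i j; rewrite addn0 => lt_ji.
by apply/eqP; move: (tri i) => /forallP/(_ j)/implyP; apply.
Qed.

Definition utcd_diag (x : utcd R n) : R := val x ord0 ord0.

Lemma utcd_diag_deep1 (x : utcd R n) : utcd_diag x = 0 -> mx_deep 1 (val x).
Proof.
move=> x0; case/andP: (valP x) => _ /forallP cst i j lt_j.
case: (ltnP j i) => [lt_ji|le_ij]; first by apply: utcd_deep0; rewrite addn0.
have -> : j = i by apply: val_inj => /=; lia.
by rewrite (eqP (cst i)); exact: x0.
Qed.

Lemma val_utcdM (x y : utcd R n) : val (x * y) = val x *m val y.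
Proof. by rewrite mulmxE rmorphM. Qed.

Lemma utcd_diag_is_zmod_morphism : zmod_morphism utcd_diag.
Proof. by move=> x y; rewrite /utcd_diag raddfB !mxE. Qed.

Lemma utcd_diag_is_monoid_morphism : monoid_morphism utcd_diag.
Proof.
split; first by rewrite /utcd_diag rmorph1 mxE.
move=> x y; rewrite /utcd_diag val_utcdM mxE (bigD1 ord0) //= big1 ?addr0 // => l nz_l.
by rewrite (utcd_deep0 y) ?mulr0 // addn0 lt0n; apply: contra nz_l => /eqP l0;
  apply/eqP/val_inj.
Qed.

HB.instance Definition _ :=
  GRing.isZmodMorphism.Build _ _ utcd_diag utcd_diag_is_zmod_morphism.
HB.instance Definition _ :=
  GRing.isMonoidMorphism.Build _ _ utcd_diag utcd_diag_is_monoid_morphism.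

Lemma prime_ideal_utcd_diag0 (I : utcd R n -> Prop) (x : utcd R n) :
  prime_ideal I -> utcd_diag x = 0 -> I x.
Proof.
case=> [[I0 _ _ _] _ Iprime] x0.
suff deepI k : (k <= n)%N -> forall y : utcd R n, mx_deep (n.+1 - k) (val y) -> I y.
  by apply: (deepI n (leqnn n)); rewrite subSnn; apply: utcd_diag_deep1.
elim: k => [|k IHk] le_kn y dy.
  rewrite subn0 in dy; have -> : y = 0 by apply: val_inj; rewrite raddf0; apply: mx_deep_eq0.
  exact: I0.
have [] // := Iprime y y => r; apply: IHk; first by lia.
rewrite !val_utcdM; apply: (@mx_deep_le _ ((n.+1 - k.+1) + 0 + (n.+1 - k.+1))%N).
  by lia.
by apply: mx_deepM => //; apply: mx_deepM => //; apply: utcd_deep0.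
Qed.

End UpperTriangularConstantDiagonal.

Theorem proposition2p2 (R : nzRingType) (n : nat) :
  reduced R -> almost_armendariz (utcd R n).
Proof.
move=> redR f g fg0 i j I primeI; apply: prime_ideal_utcd_diag0 => //.
rewrite rmorphM -!(coef_map (utcd_diag R n)); apply: (reduced_armendariz _ redR).
by rewrite -rmorphM fg0 rmorph0.
Qed.
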